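(* For every prime $p$ and $d\ge1$, any test for list agreement of $1$-dimensional $2$-assignments on the spherical building $S(p,d)$ (without any locally-differing assumption) must perform at least $2(p-1)$ queries.
   Context: $S(p,d)$: vertices are the nontrivial proper subspaces of $\mathbb F_p^{d+2}$, faces are chains $V_1<\dots<V_j$ of such subspaces. A $1$-dimensional $2$-assignment gives each edge $e$ two functions $L^e_1,L^e_2:e\to\{0,1\}$; it is agreeing if there are $g_1,g_2$ on the vertices and permutations $\pi_e$ of $\{1,2\}$ with $L^e_{\pi_e(i)}=g_i|_e$. A query is an edge and returns both local functions on it. A test for list agreement is a randomized, possibly adaptive algorithm accepting every agreeing $2$-assignment with probability $1$ and rejecting every non-agreeing one with positive probability. *)

From Stdlib Require List.
From HB Require Import structures.
From mathcomp Require Import all_boot all_order all_algebra.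
Set Implicit Arguments. Unset Strict Implicit. Unset Printing Implicit Defensive.
Import Order.TTheory GRing.Theory Num.Theory.

Definition vertex (p d : nat) :=
  {U : {vspace 'rV['F_p]_(d.+2)} | (U != 0%VS) && (U != fullv)}.

Definition edge (p d : nat) :=
  {e : vertex p d * vertex p d |
     ((val e.1 <= val e.2)%VS) && (val e.1 != val e.2)}.

(* A local function on an edge e = {V1 < V2} into {0,1}, encoded as the pair
   (value at V1, value at V2). *)
Definition localfun := (bool * bool)%type.

(* The answer to a query of an edge: both local functions (L1^e, L2^e). *)
Definition answer := (localfun * localfun)%type.

Definition assignment (p d : nat) := edge p d -> answer.

Definition restr (p d : nat) (g : vertex p d -> bool) (e : edge p d) : localfun :=
  (g (val e).1, g (val e).2).

(* Agreeing: there are g1, g2 and permutations pi_e of {1,2} with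
   L^e_{pi_e(i)} = g_i|_e (pi_e = identity or the swap). *)
Definition agreeing (p d : nat) (L : assignment p d) : Prop :=
  exists g1 g2 : vertex p d -> bool, forall e : edge p d,
    L e = (restr g1 e, restr g2 e) \/ L e = (restr g2 e, restr g1 e).

(* Deterministic adaptive query algorithms = decision trees: either stop and
   output accept (true) / reject (false), or query an edge and continue
   depending on the answer. *)
Inductive dtree (E : Type) : Type :=
  | Leaf of bool
  | Query of E & (answer -> dtree E).

Fixpoint run (E : Type) (t : dtree E) (L : E -> answer) : bool :=
  match t with
  | Leaf b => b
  | Query e k => run (k (L e)) L
  end.

Fixpoint nqueries (E : Type) (t : dtree E) (L : E -> answer) : nat :=
  match t with
  | Leaf _ => 0
  | Query e k => (nqueries (k (L e)) L).+1
  end.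

(* A randomized (possibly adaptive) algorithm: a probability distribution with
   finite support over deterministic decision trees, given as a list of
   (probability, tree) pairs with positive probabilities summing to 1. *)
Definition is_distribution (R : realFieldType) (E : Type)
    (D : seq (R * dtree E)) : Prop :=
  (forall x, List.In x D -> 0 < x.1)%R /\ (\sum_(x <- D) x.1 = 1)%R.

Definition accept_prob (R : realFieldType) (E : Type)
    (D : seq (R * dtree E)) (L : E -> answer) : R :=
  (\sum_(x <- D | run x.2 L) x.1)%R.

Definition list_agreement_test (R : realFieldType) (p d : nat)
    (D : seq (R * dtree (edge p d))) : Prop :=
  is_distribution D /\
  (forall L : assignment p d, agreeing L -> accept_prob D L = 1%R) /\
  (forall L : assignment p d, ~ agreeing L -> (0 < 1 - accept_prob D L)%R).

From Stdlib Require List.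
From mathcomp Require Import all_boot all_order all_algebra.
From mathcomp Require Import zify.
Set Implicit Arguments. Unset Strict Implicit. Unset Printing Implicit Defensive.
Import Order.TTheory GRing.Theory Num.Theory.

(* The building contains an induced cycle of length 4p, made of points and lines of a
   projective plane: A_0, L(0,0), B_0, L(1,0), A_1, ..., L(p,p-1), A_p = A_0, where
   A_x = <(1,0,x)>, B_y = <(0,1,y)> and L(s,t) = A_s + B_t.  Answer every edge by
   (indicator of the cycle, zero), except one cycle edge on which the two local functions
   are crossed.  This assignment is not agreeing: any g_1 would be constant along the rest
   of the cycle but not across the crossed edge.  Yet changing the answer on any single
   cycle edge e makes it agreeing: cutting the cycle at e leaves a path, along which the
   cycle indicator splits into two functions.  So a decision tree rejecting it must query
   every cycle edge, and a test must contain such a tree; finally 2(p-1) <= 4p. *)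

Fixpoint queried (E : Type) (t : dtree E) (L : E -> answer) : seq E :=
  match t with
  | Leaf _ => [::]
  | Query e k => e :: queried (k (L e)) L
  end.

Lemma size_queried (E : Type) (t : dtree E) L : size (queried t L) = nqueries t L.
Proof. by elim: t => //= e k IH; rewrite IH. Qed.

Lemma run_eq_on_queried (E : eqType) (t : dtree E) (L L' : E -> answer) :
  {in queried t L, L' =1 L} -> run t L' = run t L.
Proof.
elim: t => //= e k IH eqL; rewrite eqL ?mem_head //.
by apply: IH => f qf; rewrite eqL // in_cons qf orbT.
Qed.

Section WeightedSums.
Variables (R : realFieldType) (I : Type) (P : pred I) (F : I -> R).
Local Open Scope ring_scope.

Lemma sumr_In_ge0 (r : seq I) :
  (forall i, List.In i r -> 0 < F i) -> 0 <= \sum_(i <- r | P i) F i.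
Proof.
elim: r => [|j r IH] Fpos; first by rewrite big_nil.
rewrite big_cons; have rest := IH (fun i ri => Fpos i (or_intror ri)).
by case: (P j) => //; rewrite addr_ge0 // ltW // Fpos //; left.
Qed.

Lemma sumr_In_eq0 (r : seq I) :
  (forall i, List.In i r -> 0 < F i) -> \sum_(i <- r | P i) F i = 0 ->
  forall i, List.In i r -> ~~ P i.
Proof.
elim: r => [|j r IH] Fpos //; rewrite big_cons.
have Fpos_r i (ri : List.In i r) := Fpos i (or_intror ri).
case: ifP => Pj sum0.
  have : 0 < F j + \sum_(i <- r | P i) F i by rewrite ltr_wpDr ?sumr_In_ge0 ?Fpos //; left.
  by rewrite sum0 ltxx.
by move=> i [<-|ri]; [rewrite Pj | apply: IH].
Qed.

Lemma sumr_neq0_In (r : seq I) :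
  \sum_(i <- r | P i) F i != 0 -> exists i, List.In i r /\ P i.
Proof.
elim: r => [|j r IH]; first by rewrite big_nil eqxx.
rewrite big_cons; case: ifP => Pj sum_neq0; first by exists j; split => //; left.
by have [i [ri Pi]] := IH sum_neq0; exists i; split => //; right.
Qed.

End WeightedSums.

Section RandomizedTests.
Variables (R : realFieldType) (E : eqType) (D : seq (R * dtree E)).
Hypothesis D_distr : is_distribution D.
Local Open Scope ring_scope.

Lemma reject_probE L : 1 - accept_prob D L = \sum_(x <- D | ~~ run x.2 L) x.1.
Proof.
case: D_distr => _ <-; rewrite /accept_prob (bigID (fun x => run x.2 L)) /=.
by rewrite addrC addrK.
Qed.

Lemma accept_prob1_run L : accept_prob D L = 1 -> forall x, List.In x D -> run x.2 L.
Proof.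
move=> acc1 x xD; apply/negPn; move: x xD.
apply: (sumr_In_eq0 (P := fun x => ~~ run x.2 L) (F := fun x => x.1)); first by case: D_distr.
by rewrite -reject_probE acc1 subrr.
Qed.

Lemma exists_rejecting_tree L :
  0 < 1 - accept_prob D L -> exists x, List.In x D /\ ~~ run x.2 L.
Proof. by rewrite reject_probE => /lt0r_neq0 /sumr_neq0_In. Qed.

(* Adversary argument: a tree that rejects [L0] but leaves some [e \in s] unqueried
   also rejects an accepted assignment differing from [L0] only at [e]. *)
Lemma fooling_queries (good : (E -> answer) -> Prop) (L0 : E -> answer) (s : seq E) :
  (forall L, good L -> accept_prob D L = 1) -> 0 < 1 - accept_prob D L0 -> uniq s ->
  (forall e, e \in s -> exists2 L, good L & forall f, f != e -> L f = L0 f) ->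
  exists x, List.In x D /\ (size s <= nqueries x.2 L0)%N.
Proof.
move=> complete L0_rejected s_uniq fool.
have [x [xD x_rejects]] := exists_rejecting_tree L0_rejected.
exists x; split => //; rewrite -size_queried; apply: uniq_leq_size => // e es.
apply/negPn/negP => e_unqueried; have [L goodL L_L0] := fool e es.
have := accept_prob1_run (complete L goodL) xD.
rewrite (run_eq_on_queried (L := L0)) ?(negbTE x_rejects) // => f qf.
by apply: L_L0; apply: contraNneq e_unqueried => <-.
Qed.

End RandomizedTests.

Section TwistedCycle.
Variables (V E : eqType) (ends : E -> V * V).

Definition restr_on (g : V -> bool) (e : E) : localfun := (g (ends e).1, g (ends e).2).

(* [agreeing] is [agreeing_on val], up to conversion. *)
Definition agreeing_on (L : E -> answer) : Prop :=
  exists g1 g2 : V -> bool, forall e,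
    L e = (restr_on g1 e, restr_on g2 e) \/ L e = (restr_on g2 e, restr_on g1 e).

Definition links (e : E) (x y : V) : Prop := ends e = (x, y) \/ ends e = (y, x).

Lemma restr_on_addb (f a : V -> bool) e :
  restr_on a e = restr_on xpred0 e \/ restr_on a e = restr_on f e ->
  (restr_on f e, restr_on xpred0 e) = (restr_on (fun x => f x (+) a x) e, restr_on a e) \/
  (restr_on f e, restr_on xpred0 e) = (restr_on a e, restr_on (fun x => f x (+) a x) e).
Proof.
by rewrite /restr_on => -[[-> ->]|[-> ->]]; [left|right]; rewrite /= ?addbF ?addbb.
Qed.

Variables (n : nat) (v : nat -> V) (c : nat -> E).
Hypothesis n_gt2 : 2 < n.
Hypothesis v_inj : forall m m', m < n -> m' < n -> v m = v m' -> m = m'.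
Hypothesis v_period : v n = v 0.
Hypothesis c_links : forall k, links (c k) (v k) (v k.+1).

Definition on_cycle (x : V) : bool := [exists m : 'I_n, x == v m].

Lemma on_cycleP x : reflect (exists2 m, m < n & x = v m) (on_cycle x).
Proof.
apply: (iffP existsP) => [[m /eqP ->]|[m lt_mn ->]]; first by exists m.
by exists (Ordinal lt_mn).
Qed.

Hypothesis cycle_induced : forall e, on_cycle (ends e).1 -> on_cycle (ends e).2 ->
  exists2 k, k < n & e = c k.

Definition arc (j : nat) (x : V) : bool := [exists m : 'I_n, (0 < m <= j) && (x == v m)].

Lemma v_mod m : m <= n -> v m = v (m %% n).
Proof.
rewrite leq_eqVlt => /orP[/eqP ->|lt_mn]; first by rewrite modnn.
by rewrite modn_small.
Qed.

Lemma on_cycle_v m : m <= n -> on_cycle (v m).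
Proof.
move=> le_mn; apply/on_cycleP; exists (m %% n); last exact: v_mod.
by rewrite ltn_pmod //; lia.
Qed.

Lemma arc_v j m : j < n -> m <= n -> arc j (v m) = (0 < m <= j).
Proof.
move=> lt_jn le_mn; apply/existsP/idP => [[k /andP[kj /eqP vmk]]|mj].
  have := v_inj (ltn_pmod m (ltnW (ltnW n_gt2))) (ltn_ord k); rewrite -v_mod // => /(_ vmk).
  by move: le_mn; rewrite leq_eqVlt => /orP[/eqP ->|lt_mn]; rewrite ?modnn ?modn_small //; lia.
have lt_mn : m < n by lia.
by exists (Ordinal lt_mn); rewrite mj eqxx.
Qed.

Lemma arc_on_cycle j x : arc j x -> on_cycle x.
Proof. by case/existsP => k /andP[_ /eqP ->]; apply/on_cycleP; exists k. Qed.

Lemma v_succ_inj k k' : k < n -> k' < n -> v k = v k'.+1 ->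
  k = if k'.+1 == n then 0 else k'.+1.
Proof.
move=> lt_kn lt_k'n; have lt_mod : k'.+1 %% n < n by rewrite ltn_pmod //; lia.
rewrite [v k'.+1]v_mod // => /(v_inj lt_kn lt_mod) ->.
by case: eqP => [->|ne]; rewrite ?modnn // modn_small //; lia.
Qed.

Lemma c_inj k k' : k < n -> k' < n -> c k = c k' -> k = k'.
Proof.
move=> lt_kn lt_k'n ckk'.
have succ_k := v_succ_inj lt_kn lt_k'n; have succ_k' := v_succ_inj lt_k'n lt_kn.
have := c_links k; rewrite /links ckk'; case: (c_links k') => -> [] [e1 e2].
- exact: esym (v_inj lt_k'n lt_kn e1).
- by move: (succ_k (esym e2)) (succ_k' e1); do 2!case: eqP; lia.
- by move: (succ_k (esym e1)) (succ_k' e2); do 2!case: eqP; lia.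
- exact: esym (v_inj lt_k'n lt_kn e2).
Qed.

Definition twisted (e : E) : answer :=
  if e == c 0 then ((true, false), (false, true))
  else (restr_on on_cycle e, restr_on xpred0 e).

Lemma restr_on_cycle_edge k : k < n -> restr_on on_cycle (c k) = (true, true).
Proof.
move=> lt_kn; rewrite /restr_on.
by case: (c_links k) => ->; rewrite /= !on_cycle_v ?(ltnW lt_kn).
Qed.

Lemma twisted_not_agreeing : ~ agreeing_on twisted.
Proof.
move=> [g1 [g2 agree]].
have g1_restr e : restr_on g1 e = (twisted e).1 \/ restr_on g1 e = (twisted e).2.
  by case: (agree e) => ->; [left|right].
have g1_c k :
    (g1 (v k) == g1 (v k.+1)) = ((restr_on g1 (c k)).1 == (restr_on g1 (c k)).2).
  by rewrite /restr_on; case: (c_links k) => -> //=; rewrite eq_sym.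
have g1_step k : 0 < k < n -> g1 (v k) = g1 (v k.+1).
  case/andP=> k_gt0 lt_kn; apply/eqP; rewrite g1_c.
  have ck_untwisted : (c k == c 0) = false.
    by apply/negbTE/eqP => /(c_inj lt_kn (ltnW (ltnW n_gt2))) k0; rewrite k0 in k_gt0.
  by case: (g1_restr (c k)); rewrite /twisted ck_untwisted restr_on_cycle_edge // => ->.
have g1_v1 m : 0 < m <= n -> g1 (v m) = g1 (v 1).
  elim: m => [|[|m] IH] // /andP[_ lt_mn].
  by rewrite -g1_step ?IH //; lia.
have : g1 (v 0) != g1 (v 1).
  by rewrite g1_c; case: (g1_restr (c 0)); rewrite /twisted eqxx => ->.
by rewrite -v_period g1_v1 ?eqxx //; lia.
Qed.

(* Off [c j], [twisted] is the split of the cycle indicator into the arc [v 1 .. v j]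
   and the rest of the cycle. *)
Lemma untwist j : j < n ->
  exists2 L, agreeing_on L & forall e, e != c j -> L e = twisted e.
Proof.
move=> lt_jn; pose a := arc j; pose f x := on_cycle x (+) a x.
exists (fun e => if e == c j then (restr_on f e, restr_on a e) else twisted e);
  last by move=> e /negbTE ->.
exists f, a => e; case: ifP => [_|/negbT e_ncj]; first by left.
rewrite /twisted; case: ifP => [/eqP e_c0|/negbT e_nc0].
  have j_gt0 : 0 < j by rewrite lt0n; apply: contraNneq e_ncj => j0; rewrite e_c0 j0.
  have [a0 a1] : a (v 0) = false /\ a (v 1) = true by rewrite /a !arc_v //; lia.
  have [on0 on1] : on_cycle (v 0) /\ on_cycle (v 1) by rewrite !on_cycle_v //; lia.
  rewrite e_c0 /restr_on /f; case: (c_links 0) => ->; [left|right];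
    by rewrite /= a0 a1 on0 on1.
apply: restr_on_addb.
case: (boolP (on_cycle (ends e).1 && on_cycle (ends e).2)) => [/andP[on1 on2]|off].
  have [k lt_kn ek] := cycle_induced on1 on2.
  have k_neq_0 : k != 0 by apply: contraNneq e_nc0 => k0; rewrite ek k0.
  have k_neq_j : k != j by apply: contraNneq e_ncj => kj; rewrite ek kj.
  have a_k : a (v k) = a (v k.+1) by rewrite /a !arc_v ?(ltnW lt_kn) //; lia.
  rewrite ek /restr_on; case: (c_links k) => ->;
    by rewrite /= a_k !on_cycle_v ?(ltnW lt_kn) //; case: (a (v k.+1)); [right|left].
rewrite /restr_on; case/nandP: off => [off1|off2].
- have -> : a (ends e).1 = false by apply: contraNF off1; apply: arc_on_cycle.
  rewrite (negbTE off1); case a2: (a (ends e).2); [right|left] => //.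
  by rewrite (arc_on_cycle a2).
- have -> : a (ends e).2 = false by apply: contraNF off2; apply: arc_on_cycle.
  rewrite (negbTE off2); case a1: (a (ends e).1); [right|left] => //.
  by rewrite (arc_on_cycle a1).
Qed.

Lemma uniq_cycle_edges : uniq [seq c k | k <- iota 0 n].
Proof.
rewrite map_inj_in_uniq ?iota_uniq // => k k'.
by rewrite !mem_iota !add0n => /andP[_ lt_kn] /andP[_ lt_k'n]; apply: c_inj.
Qed.

Theorem cycle_query_lower_bound (R : realFieldType) (D : seq (R * dtree E)) :
  is_distribution D ->
  (forall L, agreeing_on L -> accept_prob D L = 1%R) ->
  (forall L, ~ agreeing_on L -> (0 < 1 - accept_prob D L)%R) ->
  exists L, exists x, List.In x D /\ n <= nqueries x.2 L.
Proof.
move=> D_distr complete sound; exists twisted.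
have := fooling_queries D_distr complete (sound _ twisted_not_agreeing) uniq_cycle_edges.
rewrite size_map size_iota; apply=> e /mapP[k]; rewrite mem_iota => /andP[_ lt_kn] ->.
exact: untwist.
Qed.

End TwistedCycle.

Lemma proper_nontrivial_subspace (F : fieldType) (vT : vectType F) (U : {vspace vT}) w w' :
  w \in U -> w != 0%R -> w' \notin U -> (U != 0%VS) && (U != fullv).
Proof.
move=> wU w_neq0 w'U; apply/andP; split; apply/eqP.
- by move=> U0; move: wU; rewrite U0 memv0 (negbTE w_neq0).
- by move=> UT; move: w'U; rewrite UT memvf.
Qed.

Lemma addr1_neq (R : nzRingType) (x : R) : (x + 1 == x)%R = false.
Proof. by rewrite -subr_eq0 addrAC subrr add0r oner_eq0. Qed.

Section ProjectivePlane.
Variables (F : fieldType) (d : nat).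
Local Open Scope ring_scope.

Definition vec3 (x y z : F) : 'rV[F]_(d.+3) := \row_(k < d.+3) [:: x; y; z]`_k.

Definition coord (i : nat) (w : 'rV[F]_(d.+3)) : F := w 0 (inord i).

Lemma coord_vec3 i x y z : (i < 3)%N -> coord i (vec3 x y z) = [:: x; y; z]`_i.
Proof. by move=> lt_i3; rewrite /coord mxE inordK //; apply: leq_trans lt_i3 _. Qed.

Definition vecA (x : F) := vec3 1 0 x.
Definition vecB (y : F) := vec3 0 1 y.
Definition vecC := vec3 0 0 1.
Definition plane (s t : F) := (<[vecA s]> + <[vecB t]>)%VS.

Lemma mem_vline_coord (u w : 'rV[F]_(d.+3)) :
  w \in <[u]>%VS -> exists k, forall i, coord i w = k * coord i u.
Proof. by case/vlineP => k ->; exists k => i; rewrite /coord mxE. Qed.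

Lemma mem_plane_coord s t w : w \in plane s t -> coord 2 w = coord 0 w * s + coord 1 w * t.
Proof.
case/memv_addP => _ /vlineP[a ->] [_ /vlineP[b ->] ->].
by rewrite /coord !mxE !inordK //= !mulr1 !mulr0 addr0 add0r.
Qed.

Lemma coord0 i : coord i 0 = 0.
Proof. by rewrite /coord mxE. Qed.

Lemma vecA_neq0 x : vecA x != 0.
Proof. by apply/eqP => A0; have := oner_neq0 F; rewrite -(coord0 0) -A0 /vecA coord_vec3 //= eqxx. Qed.

Lemma vecB_neq0 y : vecB y != 0.
Proof. by apply/eqP => B0; have := oner_neq0 F; rewrite -(coord0 1) -B0 /vecB coord_vec3 //= eqxx. Qed.

Lemma vecA_in_vlineA x y : (vecA x \in <[vecA y]>%VS) = (x == y).
Proof.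
apply/idP/eqP => [/mem_vline_coord[k eqk]|->]; last exact: memv_line.
by move: (eqk 0%N) (eqk 2%N); rewrite /vecA !coord_vec3 //= mulr1 => <-; rewrite mul1r.
Qed.

Lemma vecB_in_vlineB x y : (vecB x \in <[vecB y]>%VS) = (x == y).
Proof.
apply/idP/eqP => [/mem_vline_coord[k eqk]|->]; last exact: memv_line.
by move: (eqk 1%N) (eqk 2%N); rewrite /vecB !coord_vec3 //= mulr1 => <-; rewrite mul1r.
Qed.

Lemma vecA_in_vlineB x y : (vecA x \in <[vecB y]>%VS) = false.
Proof.
apply/negP => /mem_vline_coord[k /(_ 0%N)].
by rewrite /vecA /vecB !coord_vec3 //= mulr0 => /eqP; rewrite oner_eq0.
Qed.

Lemma vecB_in_vlineA y x : (vecB y \in <[vecA x]>%VS) = false.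
Proof.
apply/negP => /mem_vline_coord[k /(_ 1%N)].
by rewrite /vecA /vecB !coord_vec3 //= mulr0 => /eqP; rewrite oner_eq0.
Qed.

Lemma vecA_in_plane x s t : (vecA x \in plane s t) = (x == s).
Proof.
apply/idP/eqP => [/mem_plane_coord|->]; last by rewrite memvE addvSl.
by rewrite /vecA !coord_vec3 //= mul1r mul0r addr0.
Qed.

Lemma vecB_in_plane y s t : (vecB y \in plane s t) = (y == t).
Proof.
apply/idP/eqP => [/mem_plane_coord|->]; last by rewrite memvE addvSr.
by rewrite /vecB !coord_vec3 //= mul1r mul0r add0r.
Qed.

Lemma vecC_notin_plane s t : vecC \notin plane s t.
Proof.
apply/negP => /mem_plane_coord.
by rewrite /vecC !coord_vec3 //= !mul0r addr0 => /eqP; rewrite oner_eq0.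
Qed.

Lemma subv_plane_vlineA s t x : (plane s t <= <[vecA x]>)%VS = false.
Proof.
apply/negP => /subvP /(_ (vecB t)); rewrite vecB_in_plane eqxx.
by rewrite vecB_in_vlineA => /(_ isT).
Qed.

Lemma subv_plane_vlineB s t y : (plane s t <= <[vecB y]>)%VS = false.
Proof.
apply/negP => /subvP /(_ (vecA s)); rewrite vecA_in_plane eqxx.
by rewrite vecA_in_vlineB => /(_ isT).
Qed.

Lemma subv_plane s t s' t' : (plane s t <= plane s' t')%VS = (s == s') && (t == t').
Proof.
apply/idP/andP => [/subvP le_st|[/eqP-> /eqP->]]; last exact: subvv.
by rewrite -(vecA_in_plane _ _ t') -(vecB_in_plane _ s') !le_st // ?vecA_in_plane ?vecB_in_plane.
Qed.

End ProjectivePlane.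

Section BuildingCycle.
Variables (p d : nat).

Definition pointA (x : 'F_p) : vertex p d.+1 :=
  exist _ <[vecA d x]>%VS
    (proper_nontrivial_subspace (memv_line _) (vecA_neq0 d x) (negbT (vecB_in_vlineA d 0 x))).

Definition pointB (y : 'F_p) : vertex p d.+1 :=
  exist _ <[vecB d y]>%VS
    (proper_nontrivial_subspace (memv_line _) (vecB_neq0 d y) (negbT (vecA_in_vlineB d 0 y))).

Definition line (s t : 'F_p) : vertex p d.+1 :=
  exist _ (plane d s t)
    (proper_nontrivial_subspace (subvP (addvSl _ _) _ (memv_line _)) (vecA_neq0 d s)
       (vecC_notin_plane d s t)).

(* [kind x r] is the vertex of index [4 x + r] of the cycle
   [A_0, L(0,0), B_0, L(1,0), A_1, L(1,1), ...], and [flag x r] is its edge to the next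
   vertex, written (point, line). *)
Definition kind (x : 'F_p) (r : nat) : vertex p d.+1 :=
  match r with
  | 0 => pointA x
  | 1 => line x x
  | 2 => pointB x
  | _ => line (x + 1)%R x
  end.

Definition flag (x : 'F_p) (r : nat) : vertex p d.+1 * vertex p d.+1 :=
  match r with
  | 0 => (pointA x, line x x)
  | 1 => (pointB x, line x x)
  | 2 => (pointB x, line (x + 1)%R x)
  | _ => (pointA (x + 1)%R, line (x + 1)%R x)
  end.

Lemma flag_subv x r : (val (flag x r).1 <= val (flag x r).2)%VS.
Proof.
by case: r => [|[|[|r]]]; rewrite /= -memvE ?vecA_in_plane ?vecB_in_plane.
Qed.

Lemma flag_not_supv x r : ~~ (val (flag x r).2 <= val (flag x r).1)%VS.
Proof.
by case: r => [|[|[|r]]]; rewrite /= ?subv_plane_vlineA ?subv_plane_vlineB.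
Qed.

Lemma flag_incident x r :
  (val (flag x r).1 <= val (flag x r).2)%VS && (val (flag x r).1 != val (flag x r).2).
Proof.
rewrite flag_subv; apply: contraNneq (flag_not_supv x r) => ->; exact: subvv.
Qed.

Lemma kind_subv x y r r' : r < 4 -> r' < 4 ->
  (val (kind x r) <= val (kind y r'))%VS ->
  [\/ r = r' /\ x = y, (kind x r, kind y r') = flag x r | (kind x r, kind y r') = flag y r'].
Proof.
case: r => [|[|[|[|r]]]] // _; case: r' => [|[|[|[|r']]]] // _;
  rewrite /= -?memvE ?vecA_in_vlineA ?vecB_in_vlineA ?vecA_in_vlineB ?vecB_in_vlineB
    ?vecA_in_plane ?vecB_in_plane ?subv_plane_vlineA ?subv_plane_vlineB ?subv_plane //.
all: rewrite ?(inj_eq (addIr 1%R)) ?andbb.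
all: try by case/andP => /eqP->; rewrite addr1_neq.
all: try by case/andP => /eqP<-; rewrite eq_sym addr1_neq.
all: move=> /eqP->; first [by apply: Or31 | by apply: Or32 | by apply: Or33].
Qed.

Lemma kind_inj x y r r' : r < 4 -> r' < 4 -> kind x r = kind y r' -> r = r' /\ x = y.
Proof.
move=> lt_r4 lt_r'4 eq_kind.
have le_kind : (val (kind x r) <= val (kind y r'))%VS by rewrite eq_kind subvv.
have [//|flag_xr|flag_yr'] := kind_subv lt_r4 lt_r'4 le_kind.
- by have := flag_not_supv x r; rewrite -flag_xr /= eq_kind subvv.
- by have := flag_not_supv y r'; rewrite -flag_yr' /= eq_kind subvv.
Qed.

Definition cyc_vertex (m : nat) : vertex p d.+1 := kind (m %/ 4)%:R%R (m %% 4).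

Definition cyc_edge (k : nat) : edge p d.+1 :=
  exist _ (flag (k %/ 4)%:R%R (k %% 4)) (flag_incident _ _).

Lemma cyc_vertexE i r : r < 4 -> cyc_vertex (i * 4 + r) = kind i%:R%R r.
Proof. by move=> lt_r4; rewrite /cyc_vertex divnMDl // modnMDl !modn_small // divn_small ?addn0. Qed.

Lemma cyc_edgeE i r : r < 4 -> val (cyc_edge (i * 4 + r)) = flag i%:R%R r.
Proof. by move=> lt_r4; rewrite /= divnMDl // modnMDl !modn_small // divn_small ?addn0. Qed.

Lemma cyc_edge_links_at i r : r < 4 ->
  links val (cyc_edge (i * 4 + r)) (cyc_vertex (i * 4 + r)) (cyc_vertex (i * 4 + r).+1).
Proof.
case: r => [|[|[|[|r]]]] lt_r4; last by [].
all: rewrite /links cyc_edgeE // -addnS.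
- by left; rewrite !cyc_vertexE.
- by right; rewrite !cyc_vertexE.
- by left; rewrite !cyc_vertexE.
- have -> : i * 4 + 4 = i.+1 * 4 + 0 by rewrite mulSn addn0 addnC.
  by right; rewrite !cyc_vertexE // -natr1.
Qed.

Lemma cyc_edge_links k : links val (cyc_edge k) (cyc_vertex k) (cyc_vertex k.+1).
Proof. by rewrite (divn_eq k 4); apply/cyc_edge_links_at/ltn_pmod. Qed.

Lemma cyc_edge_induced (e : edge p d.+1) :
  on_cycle (4 * p) cyc_vertex (val e).1 -> on_cycle (4 * p) cyc_vertex (val e).2 ->
  exists2 k, k < 4 * p & e = cyc_edge k.
Proof.
move=> /(elimT (on_cycleP _ _ _)) [m lt_m e1] /(elimT (on_cycleP _ _ _)) [m' lt_m' e2].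
have val_e : val e = (cyc_vertex m, cyc_vertex m') by rewrite [val e]surjective_pairing e1 e2.
case/andP: (proj2_sig e); rewrite val_e => le_e ne_e.
have [[r_eq x_eq]|flag_m|flag_m'] := kind_subv (ltn_pmod m (isT : 0 < 4)) (ltn_pmod m' (isT : 0 < 4)) le_e.
- by rewrite /cyc_vertex r_eq x_eq eqxx in ne_e.
- by exists m => //; apply: val_inj; rewrite val_e.
- by exists m' => //; apply: val_inj; rewrite val_e.
Qed.

Hypothesis p_prime : prime p.

Lemma cyc_vertex_inj m m' : m < 4 * p -> m' < 4 * p ->
  cyc_vertex m = cyc_vertex m' -> m = m'.
Proof.
move=> lt_m lt_m' /kind_inj[||mod_eq /(congr1 (fun z : 'F_p => z : nat))]; rewrite ?ltn_pmod //.
rewrite /= !val_Fp_nat // !modn_small ?ltn_divLR // 1?mulnC //.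
by move=> div_eq; rewrite (divn_eq m 4) (divn_eq m' 4) div_eq mod_eq.
Qed.

Lemma cyc_vertex_period : cyc_vertex (4 * p) = cyc_vertex 0.
Proof. by rewrite /cyc_vertex mulKn // modnMr pchar_Fp_0. Qed.

End BuildingCycle.

Theorem mainTheorem11 (R : realFieldType) (p d : nat) (hp : prime p) (hd : 1 <= d)
    (D : seq (R * dtree (edge p d))) :
  list_agreement_test D ->
  exists L : assignment p d, exists x, List.In x D /\ 2 * (p - 1) <= nqueries x.2 L.
Proof.
case: d hd D => [|d] // _ D [D_distr [complete sound]].
have p_gt1 := prime_gt1 hp; have cycle_gt2 : 2 < 4 * p by lia.
have [L [x [xD long_run]]] := cycle_query_lower_bound
  (V := vertex p d.+1) (E := edge p d.+1) (ends := val) (v := cyc_vertex p d) (c := @cyc_edge p d)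
  cycle_gt2 (cyc_vertex_inj hp) (cyc_vertex_period d hp) (@cyc_edge_links p d)
  (@cyc_edge_induced p d) D_distr complete sound.
exists L, x; split => //; apply: leq_trans long_run; lia.
Qed.
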